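(* Let $P$ be a finite lattice and $f\in\mathcal{L}_P$. Let $\check{\mathcal{S}}_f$ be the set of minimal elements of $\mathcal{S}_f=\{s\in\mathcal{L}_P:f+s=1\}$ and $\hat{\mathcal{W}}_f$ the set of maximal elements of $\mathcal{W}_f=\{w\in\mathcal{L}_P:w\le f,\ w\text{ prime}\}$. Then the operator $\neg$ restricts to a bijection from $\check{\mathcal{S}}_f$ onto $\hat{\mathcal{W}}_f$.
   Context: $P$ is a finite lattice with greatest element $\hat p$. $\mathcal{L}_P$ is the set of maps $f:P\to P$ satisfying (A.1) $a\le f(a)$; (A.2) $a\le b\Rightarrow f(a)\le f(b)$; (A.3) $f(f(a))=f(a)$, ordered pointwise; it is a lattice with join $+$ and greatest element $1:a\mapsto\hat p$. $\Phi f=\{a:f(a)=a\}$. $f$ is prime if $P\setminus\Phi f$ is closed under $\wedge$; for prime $f$, $\neg f$ is the (prime) element of $\mathcal{L}_P$ with $\Phi(\neg f)=(P\setminus\Phi f)\cup\{\hat p\}$. (Minimal elements of $\mathcal{S}_f$ are prime, so $\neg$ is defined on them.) *)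

From HB Require Import structures.
From mathcomp Require Import all_boot all_order.
Set Implicit Arguments. Unset Strict Implicit. Unset Printing Implicit Defensive.
Import Order.TTheory.
Local Open Scope order_scope.

Section ClosureOps.
Context {d : Order.disp_t} {P : finTBLatticeType d}.

Definition closure_op (f : P -> P) : Prop :=
  [/\ forall a, a <= f a,
      forall a b, a <= b -> f a <= f b
    & forall a, f (f a) = f a].

Definition op_le (f g : P -> P) : Prop := forall a, f a <= g a.

Definition op_one : P -> P := fun _ => \top.

Definition is_op_join (f g h : P -> P) : Prop :=
  [/\ closure_op h, op_le f h, op_le g h
    & forall k, closure_op k -> op_le f k -> op_le g k -> op_le h k].

Definition Phi (f : P -> P) : pred P := fun a => f a == a.

Definition prime_op (f : P -> P) : Prop :=
  forall a b, ~~ Phi f a -> ~~ Phi f b -> ~~ Phi f (a `&` b).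

(* neg f : the closure operator whose fixed-point set is
   (P \ Phi f) U {top}: maps a to the meet of all such fixed points above a. *)
Definition neg_op (f : P -> P) : P -> P :=
  fun a => \meet_(x | (a <= x) && (~~ Phi f x || (x == \top))) x.

Definition S_set (f s : P -> P) : Prop :=
  closure_op s /\ is_op_join f s op_one.

Definition W_set (f w : P -> P) : Prop :=
  [/\ closure_op w, op_le w f & prime_op w].

Definition minimal_in (S : (P -> P) -> Prop) (s : P -> P) : Prop :=
  S s /\ forall s', S s' -> op_le s' s -> s' = s.

Definition maximal_in (S : (P -> P) -> Prop) (w : P -> P) : Prop :=
  S w /\ forall w', S w' -> op_le w w' -> w' = w.

End ClosureOps.

From HB Require Import structures.
From mathcomp Require Import all_boot all_order.
From Stdlib Require Import Classical FunctionalExtensionality.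
Set Implicit Arguments. Unset Strict Implicit. Unset Printing Implicit Defensive.
Import Order.TTheory.
Local Open Scope order_scope.

(* A closure operator on P is determined by its fixed-point set, a Moore family
   (containing top and closed under meets), and the pointwise order on closure
   operators is reverse inclusion of these families.  Thus f + s = 1 says that
   top is the only common fixed point of f and s, and for prime s the operator
   neg s just swaps Phi s and its complement (keeping top): neg is an
   order-reversing involution on prime operators.  The key point is that minimal
   elements of S_f are prime: if a and b are not fixed by s but a `&` b is, then
   adjoining to Phi s all meets a `&` m (m fixed by s) yields a Moore family
   whose closure operator is strictly below s and still in S_f.  Now neg maps
   primes of S_f into W_f and W_f into S_f, and being an order-reversing
   involution it exchanges minimal elements of S_f and maximal ones of W_f. *)

Section ClosureOperators.
Context {d : Order.disp_t} {P : finTBLatticeType d}.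
Implicit Types (f g k s w : P -> P) (M : pred P).

Definition moore_family M := M \top /\ forall a b, M a -> M b -> M (a `&` b).

Definition moore_closure M : P -> P := fun a => \meet_(x | (a <= x) && M x) x.

Lemma moore_closure_ge M a : a <= moore_closure M a.
Proof. by apply/meetsP => x /andP[]. Qed.

Lemma moore_closure_in M a : moore_family M -> M (moore_closure M a).
Proof.
case=> Mtop MI; apply: (big_ind (fun x => M x)) => //.
by move=> x /andP[].
Qed.

Lemma moore_closure_id M a : M a -> moore_closure M a = a.
Proof.
move=> Ma; apply/le_anti; rewrite moore_closure_ge andbT.
by apply: meets_inf; rewrite lexx Ma.
Qed.

Lemma moore_closure_op M : moore_family M -> closure_op (moore_closure M).
Proof.
move=> HM; split.
- exact: moore_closure_ge.
- move=> a b ab; apply/meetsP => x /andP[bx Mx]; apply: meets_inf.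
  by rewrite (le_trans ab bx) Mx.
- by move=> a; apply/moore_closure_id/moore_closure_in.
Qed.

Lemma Phi_moore_closure M : moore_family M -> Phi (moore_closure M) =1 M.
Proof.
move=> HM x; apply/eqP/idP => [<-|Mx];
  [exact: moore_closure_in | exact: moore_closure_id].
Qed.

Lemma moore_meet_extension M a : moore_family M ->
  moore_family (fun y => M y || [exists m, M m && (y == a `&` m)]).
Proof.
case=> Mtop MI; split; first by rewrite Mtop.
move=> x y /orP[Mx|/existsP[m /andP[Mm /eqP->]]]
           /orP[My|/existsP[m' /andP[Mm' /eqP->]]].
- by rewrite MI.
- by apply/orP; right; apply/existsP; exists (x `&` m'); rewrite MI //= meetCA.
- by apply/orP; right; apply/existsP; exists (m `&` y); rewrite MI //= meetA.
- apply/orP; right; apply/existsP; exists (m `&` m').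
  by rewrite MI //= meetACA meetxx.
Qed.

Lemma moore_Phi f : closure_op f -> moore_family (Phi f).
Proof.
case=> ext mon idem; rewrite /moore_family /Phi; split=> [|a b /eqP fa /eqP fb].
- by apply/eqP/le_anti; rewrite lex1 ext.
- apply/eqP/le_anti; rewrite ext andbT lexI.
  by rewrite -[X in _ <= X]fa -[X in _ && (_ <= X)]fb !mon ?leIl ?leIr.
Qed.

Lemma Phi_top f : closure_op f -> Phi f \top.
Proof. by case/moore_Phi. Qed.

Lemma closure_opE f : closure_op f -> f = moore_closure (Phi f).
Proof.
case=> ext mon idem; apply: functional_extensionality => a.
apply/le_anti/andP; split.
- by apply/meetsP => x /andP[ax /eqP <-]; apply: mon.
- by apply: meets_inf; rewrite ext /Phi idem eqxx.
Qed.

Lemma eq_closure_op f g : closure_op f -> closure_op g -> Phi f =1 Phi g -> f = g.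
Proof.
move=> cf cg eqPhi; rewrite (closure_opE cf) (closure_opE cg).
by apply: functional_extensionality => a; apply: eq_bigl => x; rewrite eqPhi.
Qed.

Lemma op_le_Phi g k : closure_op g -> closure_op k ->
  op_le g k <-> (forall x, Phi k x -> Phi g x).
Proof.
move=> [eg mg _] [ek _ ik]; split.
- move=> gk x /eqP kx; apply/eqP/le_anti; rewrite eg andbT -{2}kx; exact: gk.
- move=> sub a; have /eqP <- : Phi g (k a) by apply: sub; rewrite /Phi ik.
  exact: mg.
Qed.

Lemma op_le_trans f g k : op_le f g -> op_le g k -> op_le f k.
Proof. by move=> fg gk a; apply: le_trans (fg a) (gk a). Qed.

Lemma op_one_closure : closure_op (@op_one d P).
Proof. by split=> *; rewrite /op_one ?lex1. Qed.

Lemma op_join_oneP f s : closure_op f -> closure_op s ->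
  is_op_join f s op_one <-> (forall x, Phi f x -> Phi s x -> x = \top).
Proof.
move=> cf cs; split.
- case=> _ _ _ join_least x fx sx.
  pose M y := Phi f y && Phi s y.
  have HM : moore_family M.
    have [ftop fI] := moore_Phi cf; have [stop sI] := moore_Phi cs.
    by split=> [|a b /andP[fa sa] /andP[fb sb]]; rewrite /M ?ftop ?stop ?fI ?sI.
  have ck := moore_closure_op HM.
  have fk : op_le f (moore_closure M).
    by apply/(op_le_Phi cf ck) => y; rewrite Phi_moore_closure // => /andP[].
  have sk : op_le s (moore_closure M).
    by apply/(op_le_Phi cs ck) => y; rewrite Phi_moore_closure // => /andP[].
  have := join_least _ ck fk sk x.
  by rewrite /op_one moore_closure_id /M ?fx ?sx // le1x => /eqP.
- move=> only_top; split; [exact: op_one_closure | by move=> a; rewrite lex1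
                          | by move=> a; rewrite lex1 |].
  move=> k ck fk sk a; rewrite /op_one le1x; apply/eqP.
  have [_ _ ik] := ck; have kka : Phi k (k a) by rewrite /Phi ik.
  by apply: only_top; [apply: (op_le_Phi cf ck).1 fk _ kka
                     | apply: (op_le_Phi cs ck).1 sk _ kka].
Qed.

Lemma minimal_S_witness f s a : closure_op f -> minimal_in (S_set f) s ->
  ~~ Phi s a -> exists m, [&& Phi s m, Phi f (a `&` m) & a `&` m != \top].
Proof.
move=> cf [[cs join_fs] min_s] nsa; apply: NNPP => no_witness.
pose M y := Phi s y || [exists m, Phi s m && (y == a `&` m)].
have HM : moore_family M by apply/moore_meet_extension/moore_Phi.
have ck := moore_closure_op HM.
have Sk : S_set f (moore_closure M).
  split=> //; apply/(op_join_oneP cf ck) => x fx.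
  rewrite Phi_moore_closure // => /orP[sx|/existsP[m /andP[sm /eqP xE]]].
  - exact: (op_join_oneP cf cs).1 join_fs x fx sx.
  - apply: NNPP => nx; apply: no_witness; exists m.
    by rewrite sm -xE fx; apply/eqP.
have ks : op_le (moore_closure M) s.
  by apply/(op_le_Phi ck cs) => y sy; rewrite Phi_moore_closure // /M sy.
move: nsa; rewrite -(min_s _ Sk ks) Phi_moore_closure // /M => /norP[_].
by move/existsPn/(_ \top); rewrite meetx1 eqxx Phi_top.
Qed.

Lemma minimal_S_prime f s : closure_op f -> minimal_in (S_set f) s -> prime_op s.
Proof.
move=> cf ms a b nsa nsb; have [[cs join_fs] _] := ms.
have [m /and3P[sm fam nam]] := minimal_S_witness cf ms nsa.
have [m' /and3P[sm' fbm _]] := minimal_S_witness cf ms nsb.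
apply/negP => sab; move: nam; apply/negP/negPn/eqP.
have [_ fI] := moore_Phi cf; have [_ sI] := moore_Phi cs.
have top_meet : (a `&` m) `&` (b `&` m') = \top.
  apply: ((op_join_oneP cf cs).1 join_fs); first exact: fI.
  by rewrite meetACA; apply: sI (sI _ _ sm sm').
by apply/eqP; rewrite -le1x -top_meet leIl.
Qed.

Lemma moore_neg s : prime_op s -> moore_family (fun x => ~~ Phi s x || (x == \top)).
Proof.
move=> ps; split; first by rewrite eqxx orbT.
move=> a b /orP[na|/eqP->] /orP[nb|/eqP->];
  by rewrite ?meetx1 ?meet1x ?ps ?na ?nb ?eqxx ?orbT.
Qed.

Lemma Phi_neg s : prime_op s -> Phi (neg_op s) =1 (fun x => ~~ Phi s x || (x == \top)).
Proof. by move=> ps; apply/Phi_moore_closure/moore_neg. Qed.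

Lemma neg_closure_op s : prime_op s -> closure_op (neg_op s).
Proof. by move=> ps; apply/moore_closure_op/moore_neg. Qed.

Lemma neg_prime s : closure_op s -> prime_op s -> prime_op (neg_op s).
Proof.
move=> cs ps a b; rewrite !Phi_neg // !negb_or !negbK => /andP[sa nta] /andP[sb _].
have [_ sI] := moore_Phi cs; rewrite sI //=.
by apply: contra nta => /eqP abE; rewrite -le1x -abE leIl.
Qed.

Lemma negK s : closure_op s -> prime_op s -> neg_op (neg_op s) = s.
Proof.
move=> cs ps; apply: eq_closure_op => //.
- exact/neg_closure_op/neg_prime.
- move=> x; rewrite (Phi_neg (neg_prime cs ps)) (Phi_neg ps) negb_or negbK.
  by have [->|_] := eqVneq x \top; rewrite ?Phi_top ?orbT ?andbT ?orbF.
Qed.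

Lemma neg_op_le s t : closure_op s -> prime_op s -> closure_op t -> prime_op t ->
  op_le s t -> op_le (neg_op t) (neg_op s).
Proof.
move=> cs ps ct pt st; apply/(op_le_Phi (neg_closure_op pt) (neg_closure_op ps)).
move=> x; rewrite !Phi_neg // => /orP[nsx|->]; last exact: orbT.
by rewrite (contra ((op_le_Phi cs ct).1 st x) nsx).
Qed.

Lemma W_neg_S f w : closure_op f -> W_set f w -> S_set f (neg_op w).
Proof.
move=> cf [cw wf pw]; have cn := neg_closure_op pw; split=> //.
apply/(op_join_oneP cf cn) => x fx; rewrite Phi_neg // => /orP[nwx|/eqP//].
by move: nwx; rewrite ((op_le_Phi cw cf).1 wf x fx).
Qed.

Lemma minimal_S_neg_W f s : closure_op f -> minimal_in (S_set f) s ->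
  W_set f (neg_op s).
Proof.
move=> cf ms; have [[cs join_fs] _] := ms; have ps := minimal_S_prime cf ms.
split; [exact: neg_closure_op | | exact: neg_prime].
apply/(op_le_Phi (neg_closure_op ps) cf) => x fx; rewrite Phi_neg //.
have [_|ntop] := eqVneq x \top; rewrite ?orbT // orbF.
by apply: contra ntop => sx; apply/eqP/((op_join_oneP cf cs).1 join_fs).
Qed.

Lemma minimal_S_neg_maximal_W f s : closure_op f -> minimal_in (S_set f) s ->
  maximal_in (W_set f) (neg_op s).
Proof.
move=> cf ms; split; first exact: minimal_S_neg_W.
have [[cs _] min_s] := ms; have ps := minimal_S_prime cf ms.
move=> w Ww sw; have [cw _ pw] := Ww.
have ws : op_le (neg_op w) s.
  by rewrite -(negK cs ps); apply: neg_op_le (neg_prime cs ps) cw pw sw;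
    apply: neg_closure_op.
by rewrite -(min_s _ (W_neg_S cf Ww) ws) negK.
Qed.

Lemma exists_minimal_below (S : (P -> P) -> Prop) s0 :
  (forall s, S s -> closure_op s) -> S s0 ->
  exists2 s, minimal_in S s & op_le s s0.
Proof.
move=> S_closure; have [n] := ubnP #|[set x | ~~ Phi s0 x]|.
elim: n s0 => // n IH s0 card_s0 S0.
have [min_s0|not_min] := classic (minimal_in S s0); first by exists s0.
have [s1 [S1 s10 s1_neq]] : exists s1, [/\ S s1, op_le s1 s0 & s1 <> s0].
  apply: NNPP => none; apply: not_min; split=> // s1 S1 s10.
  by apply: NNPP => s1_neq; apply: none; exists s1.
have c0 := S_closure _ S0; have c1 := S_closure _ S1.
have fewer : #|[set x | ~~ Phi s1 x]| < #|[set x | ~~ Phi s0 x]|.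
  apply: proper_card; rewrite properEneq; apply/andP; split.
  - apply/eqP => eqPhi; apply: s1_neq; apply: eq_closure_op => // x.
    by apply/negb_inj; move/setP: eqPhi => /(_ x); rewrite !inE.
  - apply/subsetP => x; rewrite !inE; apply: contra.
    exact: (op_le_Phi c1 c0).1.
have [s ms ss1] := IH s1 (leq_trans fewer card_s0) S1.
by exists s => //; apply: op_le_trans s10.
Qed.

End ClosureOperators.

Theorem mainTheorem15 (d : Order.disp_t) (P : finTBLatticeType d) (f : P -> P) :
  closure_op f ->
  [/\ (forall s, minimal_in (S_set f) s -> maximal_in (W_set f) (neg_op s)),
      (forall s1 s2, minimal_in (S_set f) s1 -> minimal_in (S_set f) s2 ->
         neg_op s1 = neg_op s2 -> s1 = s2)
    & (forall w, maximal_in (W_set f) w ->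
         exists2 s, minimal_in (S_set f) s & neg_op s = w)].
Proof.
move=> cf; split.
- by move=> s; apply: minimal_S_neg_maximal_W.
- move=> s1 s2 m1 m2 eq_neg.
  have [[c1 _] _] := m1; have [[c2 _] _] := m2.
  rewrite -(negK c1 (minimal_S_prime cf m1)) -(negK c2 (minimal_S_prime cf m2)).
  by rewrite eq_neg.
- move=> w [Ww max_w]; have [cw _ pw] := Ww.
  have [s ms s_negw] := exists_minimal_below (S := S_set f) (fun s => @proj1 _ _)
    (W_neg_S cf Ww).
  exists s => //; have [[cs _] _] := ms; have ps := minimal_S_prime cf ms.
  apply: max_w; first exact: minimal_S_neg_W.
  rewrite -(negK cw pw); apply: neg_op_le cs ps _ (neg_prime cw pw) s_negw.
  exact: neg_closure_op.
Qed.
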